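(* Let $G=(U,E)$ be a tree and $\mathcal S\subset 2^U$ a category system such that $(G,\mathcal S)$ is internally connected and shattered. Then the greedy category-based routing strategy ROUTING routes messages correctly between every pair of vertices.
   Context: $N(s)$ denotes the set of neighbors of $s$ in $G$. $(G,\mathcal S)$ is internally connected if for every $C\in\mathcal S$ the subgraph of $G$ induced by $C$ is connected. $(G,\mathcal S)$ is shattered if for all $s,t\in U$ with $s\neq t$ there exist $u\in N(s)$ and $C\in\mathcal S$ with $u\in C$, $t\in C$ and $s\notin C$ (possibly $u=t$). For $u\in U$ let $\mathrm{cat}(u)=\{C\in\mathcal S: u\in C\}$, and $d(s,t)=|\mathrm{cat}(t)\setminus\mathrm{cat}(s)|$. ROUTING: a node $u$ holding a message for destination $w\neq u$ forwards it to a neighbor $v\in N(u)$ with $d(v,w)<d(u,w)$. ROUTING routes correctly between all pairs if for every ordered pair of distinct vertices $u,w$ there is a neighbor $v\in N(u)$ with $d(v,w)<d(u,w)$. *)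

From mathcomp Require Import all_boot.
Set Implicit Arguments. Unset Strict Implicit. Unset Printing Implicit Defensive.

Definition simple_graph (T : finType) (e : rel T) : Prop :=
  symmetric e /\ irreflexive e.

Definition connected_graph (T : finType) (e : rel T) : Prop :=
  forall x y : T, connect e x y.

Definition acyclic_graph (T : finType) (e : rel T) : Prop :=
  forall c : seq T, 3 <= size c -> uniq c -> ~~ cycle e c.

Definition is_tree (T : finType) (e : rel T) : Prop :=
  [/\ simple_graph e, connected_graph e & acyclic_graph e].

Definition induced (T : finType) (e : rel T) (C : {set T}) : rel T :=
  [rel a b | [&& e a b, a \in C & b \in C]].

Definition internally_connected (T : finType) (e : rel T) (S : {set {set T}}) : Prop :=
  forall C, C \in S -> forall x y, x \in C -> y \in C -> connect (induced e C) x y.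

Definition shattered (T : finType) (e : rel T) (S : {set {set T}}) : Prop :=
  forall s t : T, s != t ->
    exists u : T, exists C : {set T},
      [/\ e s u, C \in S, u \in C, t \in C & s \notin C].

Definition cat (T : finType) (S : {set {set T}}) (u : T) : {set {set T}} :=
  [set C in S | u \in C].

Definition dist_cat (T : finType) (S : {set {set T}}) (s t : T) : nat :=
  #|cat S t :\: cat S s|.

Definition routes_correctly (T : finType) (e : rel T) (S : {set {set T}}) : Prop :=
  forall u w : T, u != w ->
    exists v : T, e u v && (dist_cat S v w < dist_cat S u w).

From Pilot Require Import Defs.
From mathcomp Require Import all_boot.
Set Implicit Arguments. Unset Strict Implicit.

(* Shattering gives, for u != w, a neighbour v of u and a category
   C containing v and w but not u; C is connected, so v reaches w without
   passing through u.  Every category D containing both u and w is connected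
   too, so the path from u to w inside D leaves u through a neighbour that
   also reaches w avoiding u.  In a tree that neighbour must be v, so D also
   contains v.  Hence cat(w) \ cat(v) is contained in cat(w) \ cat(u), and
   strictly so because of C. *)

Section InducedSubgraphs.

Variables (T : finType) (e : rel T).

Lemma induced_sym (C : {set T}) : symmetric e -> symmetric (induced e C).
Proof. by move=> sym_e a b; rewrite /induced /= sym_e [(a \in C) && _]andbC. Qed.

Lemma connect_induced_sub (C D : {set T}) (x y : T) :
  C \subset D -> connect (induced e C) x y -> connect (induced e D) x y.
Proof.
move=> /subsetP sCD; apply: connect_sub => a b /and3P [eab aC bC].
by apply: connect1; rewrite /induced /= eab !sCD.
Qed.

Lemma path_induced_mem (C : {set T}) (x : T) (p : seq T) :
  path (induced e C) x p -> all [in C] p.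
Proof.
by elim: p x => [|y p IHp] x //= /andP [/and3P [_ _ yC] /IHp ->]; rewrite yC.
Qed.

(* The tail of a shortest path from u never returns to u. *)
Lemma connect_first_step (C : {set T}) (u w : T) :
  u != w -> connect (induced e C) u w ->
  exists2 x, induced e C u x & connect (induced e (C :\ u)) x w.
Proof.
move=> neq_uw /connectP [p p_uw w_last]; move: neq_uw; rewrite {}w_last.
case: (shortenP p_uw) => [[|x q] /=]; first by rewrite eqxx.
move=> /andP [ux q_path] /andP [x_notin_u u_notin_xq] _ _.
have /andP [_ u_notin_q] := u_notin_xq.
exists x => //; apply/connectP; exists q => //.
apply: (@sub_in_path _ (predC1 u) (induced e C)) q_path.
  move=> a b; rewrite !inE => ua ub /and3P [eab aC bC].
  by rewrite /induced /= !inE eab ua ub aC bC.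
by apply/allP => z; rewrite inE /=; apply: contraTneq => ->.
Qed.

End InducedSubgraphs.

(* A path between two neighbours of u avoiding u closes a cycle through u. *)
Lemma tree_neighbors_separated (T : finType) (e : rel T) (u x y : T) :
  is_tree e -> e u x -> e u y -> connect (induced e [set~ u]) x y -> x = y.
Proof.
case=> [[sym_e irr_e] _ acyclic_e] ux uy /connectP [p p_xy y_last].
apply/eqP/negPn/negP => neq_xy; move: neq_xy uy; rewrite {}y_last.
case: (shortenP p_xy) => q q_path /andP [x_notin_q uniq_q] _ neq_xy uy.
have x_neq_u : x != u by apply: contraTneq ux => ->; rewrite irr_e.
have u_notin_q : u \notin q.
  apply/negP => /(allP (path_induced_mem q_path)).
  by rewrite !inE eqxx.
apply: (negP (acyclic_e (u :: x :: q) _ _)).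
- by case: q {q_path x_notin_q uniq_q u_notin_q} neq_xy uy => //=; rewrite eqxx.
- rewrite /= inE negb_or eq_sym x_neq_u u_notin_q x_notin_q; exact: uniq_q.
- rewrite /cycle rcons_path /= ux sym_e uy andbT.
  by apply: sub_path q_path => a b /and3P [].
Qed.

Lemma dist_cat_lt (T : finType) (S : {set {set T}}) (u v w : T) (C : {set T}) :
  Defs.cat S u :&: Defs.cat S w \subset Defs.cat S v ->
  C \in Defs.cat S v -> C \in Defs.cat S w -> C \notin Defs.cat S u ->
  dist_cat S v w < dist_cat S u w.
Proof.
move=> /subsetP s_uw_v Cv Cw Cu; apply/proper_card/properP; split.
  apply/subsetP => D; rewrite !in_setD => /andP [Dv Dw]; rewrite Dw andbT.
  by apply: contra Dv => Du; apply: s_uw_v; rewrite in_setI Du.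
by exists C; rewrite !in_setD ?Cw ?Cv ?Cu.
Qed.

Lemma tree_category_mem_neighbor (T : finType) (e : rel T) (S : {set {set T}})
    (D : {set T}) (u v w : T) :
  is_tree e -> internally_connected e S -> u != w ->
  e u v -> connect (induced e [set~ u]) v w ->
  D \in S -> u \in D -> w \in D -> v \in D.
Proof.
move=> tree ic neq_uw uv vw DS uD wD.
have [[sym_e _] _ _] := tree.
have [x /and3P [ux _ xD] xw] := connect_first_step neq_uw (ic D DS u w uD wD).
have {}xw : connect (induced e [set~ u]) x w.
  by apply: connect_induced_sub xw; rewrite setDE subsetIr.
suff -> : v = x by [].
apply: tree_neighbors_separated tree uv ux _.
by apply: connect_trans vw _; rewrite (sym_connect_sym (induced_sym _ sym_e)).
Qed.

Theorem lemma2 (T : finType) (e : rel T) (S : {set {set T}}) :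
  is_tree e -> internally_connected e S -> shattered e S ->
  routes_correctly e S.
Proof.
move=> tree ic sh u w neq_uw.
have [v [C [uv CS vC wC uC]]] := sh u w neq_uw.
exists v; rewrite uv /=.
have vw : connect (induced e [set~ u]) v w.
  apply: connect_induced_sub (ic C CS v w vC wC).
  by apply/subsetP => z zC; rewrite !inE; apply: contraNneq uC => <-.
apply: (@dist_cat_lt _ _ _ _ _ C); rewrite ?inE ?CS ?vC ?wC ?(negbTE uC) //.
apply/subsetP => D; rewrite !inE => /andP [/andP [DS uD] /andP [_ wD]].
by rewrite DS (tree_category_mem_neighbor tree ic neq_uw uv vw DS uD wD).
Qed.
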